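(* Let $d\ge2$ be finite and consider a $d$-dimensional quantum system with finitely many measurement settings and finitely many outcomes. A measurement $x$ is specified by effects $\{\mathcal{E}_{a|x}\}_a$ (positive semidefinite, $\sum_a\mathcal{E}_{a|x}=\mathbb{1}$) together with, for each outcome $a$, a post-measurement state $\sigma_{a|x}$; the same measurements are used at both time steps, so that $p(ab|xy)=\mathrm{tr}(\mathcal{E}_{a|x}\varrho_{in})\,\mathrm{tr}(\mathcal{E}_{b|y}\sigma_{a|x})$. For arbitrary real coefficients $\alpha_{abxy}$ let $\mathcal{R}=\sum_{a,b,x,y}\alpha_{abxy}\,p(ab|xy)$, and let $R(\mathcal{P})$ be the supremum of $\mathcal{R}$ over all initial states $\varrho_{in}$ with purity $\mathrm{tr}(\varrho_{in}^2)=\mathcal{P}$ and all choices of effects and post-measurement states. Then $R(\mathcal{P})$ is a monotonically non-decreasing function of $\mathcal{P}\in[1/d,1]$.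
   Context: The purity of a state $\varrho$ is $\mathrm{tr}(\varrho^2)$, which ranges from $1/d$ (maximally mixed state) to $1$ (pure states). *)

From HB Require Import structures.
From mathcomp Require Import all_boot all_order all_algebra.
From mathcomp Require Import complex.
From mathcomp Require Import all_classical all_reals.
From mathcomp Require Import ereal.

Set Implicit Arguments.
Unset Strict Implicit.
Unset Printing Implicit Defensive.

Import Order.TTheory GRing.Theory Num.Theory.
Local Open Scope ring_scope.

Definition adjmx (R : rcfType) (m n : nat) (A : 'M[R[i]]_(m, n)) : 'M[R[i]]_(n, m) :=
  (map_mx Num.conj A)^T.

(* positive semidefinite: Hermitian, and v^* A v >= 0 for every vector v
   (in the order of the numClosedField R[i], i.e. real and nonnegative) *)
Definition psd (R : rcfType) (d : nat) (A : 'M[R[i]]_d) : Prop :=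
  adjmx A = A /\ forall v : 'cV[R[i]]_d, 0 <= (adjmx v *m A *m v) 0 0.

Definition is_state (R : rcfType) (d : nat) (rho : 'M[R[i]]_d) : Prop :=
  psd rho /\ \tr rho = 1.

(* purity tr(rho^2), a real number for Hermitian rho *)
Definition purity (R : rcfType) (d : nat) (rho : 'M[R[i]]_d) : R :=
  complex.Re (\tr (rho *m rho)).

(* A measurement x with k outcomes: effects E x a (POVM) and post-measurement
   states sig x a. *)
Definition is_instrument (R : rcfType) (d m k : nat)
  (E sig : 'I_m -> 'I_k -> 'M[R[i]]_d) : Prop :=
  forall x : 'I_m,
    (forall a : 'I_k, psd (E x a)) /\
    \sum_(a < k) E x a = 1%:M /\
    (forall a : 'I_k, is_state (sig x a)).

Definition seqprob (R : rcfType) (d m k : nat) (E sig : 'I_m -> 'I_k -> 'M[R[i]]_d)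
  (rho : 'M[R[i]]_d) (a b : 'I_k) (x y : 'I_m) : R[i] :=
  \tr (E x a *m rho) * \tr (E y b *m sig x a).

Definition Rval (R : rcfType) (d m k : nat) (alpha : 'I_k -> 'I_k -> 'I_m -> 'I_m -> R)
  (E sig : 'I_m -> 'I_k -> 'M[R[i]]_d) (rho : 'M[R[i]]_d) : R :=
  \sum_(a < k) \sum_(b < k) \sum_(x < m) \sum_(y < m)
     alpha a b x y * complex.Re (seqprob E sig rho a b x y).

Definition Rmax (R : realType) (d m k : nat) (alpha : 'I_k -> 'I_k -> 'I_m -> 'I_m -> R)
  (P : R) : \bar R :=
  ereal_sup [set r : \bar R | exists (rho : 'M[R[i]]_d)
       (E sig : 'I_m -> 'I_k -> 'M[R[i]]_d),
       [/\ is_state rho, purity rho = P, is_instrument E sig &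
            r = (Rval alpha E sig rho)%:E]]%classic.

From HB Require Import structures.
From mathcomp Require Import all_boot all_order all_algebra.
From mathcomp Require Import complex.
From mathcomp Require Import all_classical all_reals.
From mathcomp Require Import ereal.
From mathcomp Require Import spectral.
From mathcomp Require Import ring.

Set Implicit Arguments.
Unset Strict Implicit.
Unset Printing Implicit Defensive.

Import Order.TTheory GRing.Theory Num.Theory.
Local Open Scope complex_scope.
Local Open Scope ring_scope.

(* For fixed measurements, rho |-> Rval rho is the restriction to states of a
   real-linear functional.  By the spectral theorem every state is a convex
   combination of pure states, so some pure state sigma does at least as well
   as rho.  On the segment from rho to sigma the purity is a quadratic
   polynomial in the mixing parameter, running from tr(rho^2) to 1, so it takes
   every intermediate value P; by linearity the corresponding mixture again
   does at least as well as rho. *)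

Section ConjugateTranspose.
Variable R : rcfType.

Lemma adjmxE m n (A : 'M[R[i]]_(m, n)) : adjmx A = (A ^t*)%sesqui.
Proof. by rewrite /adjmx map_trmx. Qed.

Lemma adjmxK m n (A : 'M[R[i]]_(m, n)) : adjmx (adjmx A) = A.
Proof. by rewrite !adjmxE trmxCK. Qed.

Lemma adjmxM m n p (A : 'M[R[i]]_(m, n)) (B : 'M[R[i]]_(n, p)) :
  adjmx (A *m B) = adjmx B *m adjmx A.
Proof. by rewrite /adjmx map_mxM trmx_mul. Qed.

Lemma adjmxD m n (A B : 'M[R[i]]_(m, n)) : adjmx (A + B) = adjmx A + adjmx B.
Proof. by rewrite /adjmx map_mxD linearD. Qed.

Lemma adjmxZ_real m n (a : R) (A : 'M[R[i]]_(m, n)) :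
  adjmx (a%:C *: A) = a%:C *: adjmx A.
Proof.
by apply/matrixP => i j; rewrite !mxE rmorphM; congr (_ * _); exact: conjc_real.
Qed.

Lemma adjmx_delta m n (i0 : 'I_m) (j0 : 'I_n) :
  adjmx (delta_mx i0 j0 : 'M[R[i]]_(m, n)) = delta_mx j0 i0.
Proof.
apply/matrixP => i j; rewrite !mxE.
by case: (i == j0); case: (j == i0); rewrite /= ?rmorph1 ?rmorph0.
Qed.

End ConjugateTranspose.

Section RealPart.
Variable R : rcfType.

Lemma ReD (x y : R[i]) : complex.Re (x + y) = complex.Re x + complex.Re y.
Proof. by case: x; case: y. Qed.

Lemma ReM_real (r : R) (x : R[i]) : complex.Re (r%:C * x) = r * complex.Re x.
Proof. by case: x => a b /=; rewrite mul0r subr0. Qed.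

Lemma ge0_ReE (x : R[i]) : 0 <= x -> x = (complex.Re x)%:C /\ 0 <= complex.Re x.
Proof. by move=> x_ge0; have xE := RRe_real (ger0_real x_ge0); rewrite -lecR xE. Qed.

End RealPart.

Section States.
Variables (R : rcfType) (d : nat).
Implicit Types (A rho sigma : 'M[R[i]]_d) (u : 'cV[R[i]]_d).

Lemma psd_rank_one u : psd (u *m adjmx u).
Proof.
split; first by rewrite adjmxM adjmxK.
move=> v; set w := adjmx u *m v.
have -> : adjmx v *m (u *m adjmx u) *m v = adjmx w *m w.
  by rewrite /w adjmxM adjmxK !mulmxA.
by rewrite mxE big_ord1 mulrC /adjmx !mxE mul_conjC_ge0.
Qed.

Lemma pure_state_rank_one u :
  adjmx u *m u = 1%:M -> is_state (u *m adjmx u) /\ purity (u *m adjmx u) = 1.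
Proof.
move=> u_unit.
have tr1 : \tr (u *m adjmx u) = 1 by rewrite mxtrace_mulC u_unit mxtrace1.
split; first by split; [exact: psd_rank_one | exact: tr1].
by rewrite /purity mulmxA -[u *m _ *m u]mulmxA u_unit mulmx1 tr1.
Qed.

Lemma normal_eigen_decomposition A :
  A *m adjmx A = adjmx A *m A ->
  exists u : 'I_d -> 'cV[R[i]]_d, (forall j, adjmx (u j) *m u j = 1%:M) /\
    A = \sum_j (adjmx (u j) *m A *m u j) 0 0 *: (u j *m adjmx (u j)).
Proof.
move=> A_normal; set P := spectralmx A; set D := spectral_diag A.
have P_unitary : P \is unitarymx := spectral_unitarymx A.
have AE : A = (P ^t*)%sesqui *m diag_mx D *m P.
  rewrite -invmx_unitary //; apply/orthomx_spectralP.
  by apply/normalmxP; rewrite -adjmxE.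
pose u j : 'cV[R[i]]_d := (P ^t*)%sesqui *m delta_mx j 0.
have adj_u j : adjmx (u j) = delta_mx 0 j *m P.
  by rewrite adjmxM adjmx_delta adjmxE trmxCK.
exists u; split=> [j|].
  rewrite adj_u mulmxA mulmxtVK // mul_delta_mx.
  by apply/matrixP => i i'; rewrite !ord1 !mxE.
rewrite {1}AE diag_mx_sum_delta mulmx_sumr mulmx_suml; apply: eq_bigr => j _.
have -> : (adjmx (u j) *m A *m u j) 0 0 = D 0 j.
  rewrite adj_u AE !mulmxA !mulmxtVK // -rowE -colE.
  by rewrite !mxE eqxx mulr1n.
rewrite adj_u -scalemxAr -scalemxAl; congr (_ *: _).
by rewrite !mulmxA -[_ *m delta_mx j 0 *m _]mulmxA mul_delta_mx.
Qed.

Lemma state_pure_decomposition rho : is_state rho ->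
  exists (c : 'I_d -> R) (s : 'I_d -> 'M[R[i]]_d),
    [/\ forall j, 0 <= c j, \sum_j c j = 1,
        forall j, is_state (s j) /\ purity (s j) = 1
      & rho = \sum_j (c j)%:C *: s j].
Proof.
move=> [[rho_herm rho_psd] tr_rho].
have [u [u_unit rhoE]] : exists u : 'I_d -> 'cV[R[i]]_d,
    (forall j, adjmx (u j) *m u j = 1%:M) /\
    rho = \sum_j (adjmx (u j) *m rho *m u j) 0 0 *: (u j *m adjmx (u j)).
  by apply: normal_eigen_decomposition; rewrite rho_herm.
pose c j := complex.Re ((adjmx (u j) *m rho *m u j) 0 0).
have cE j : (adjmx (u j) *m rho *m u j) 0 0 = (c j)%:C /\ 0 <= c j.
  exact/ge0_ReE/rho_psd.
have pure j := pure_state_rank_one (u_unit j).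
have {}rhoE : rho = \sum_j (c j)%:C *: (u j *m adjmx (u j)).
  by rewrite [LHS]rhoE; apply: eq_bigr => j _; rewrite (proj1 (cE j)).
exists c, (fun j => u j *m adjmx (u j)); split => // [j|]; first exact: (cE j).2.
apply: (@complexI R); rewrite rmorph_sum rmorph1 -tr_rho rhoE raddf_sum.
by apply: eq_bigr => j _; rewrite /= mxtraceZ (proj2 (proj1 (pure j))) mulr1.
Qed.

Definition mixture (t : R) rho sigma : 'M[R[i]]_d := (1 - t)%:C *: rho + t%:C *: sigma.

Lemma mixture0 rho sigma : mixture 0 rho sigma = rho.
Proof. by rewrite /mixture subr0 scale1r scale0r addr0. Qed.

Lemma mixture1 rho sigma : mixture 1 rho sigma = sigma.
Proof. by rewrite /mixture subrr scale0r scale1r add0r. Qed.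

Lemma is_state_mixture t rho sigma :
  0 <= t <= 1 -> is_state rho -> is_state sigma -> is_state (mixture t rho sigma).
Proof.
move=> /andP[t_ge0 t_le1] [[rho_herm rho_psd] tr_rho] [[sig_herm sig_psd] tr_sig].
rewrite /mixture; split; [split|].
- by rewrite adjmxD !adjmxZ_real rho_herm sig_herm.
- move=> v; have := rho_psd v; have := sig_psd v.
  rewrite mulmxDr mulmxDl -!scalemxAr -!scalemxAl !mxE => sig_ge0 rho_ge0.
  by apply: addr_ge0; apply: mulr_ge0; rewrite ?ler0c ?subr_ge0.
- by rewrite mxtraceD !mxtraceZ tr_rho tr_sig !mulr1 -rmorphD subrK.
Qed.

Lemma purity_mixture t rho sigma :
  purity (mixture t rho sigma) = (1 - t) ^+ 2 * purity rho
    + (1 - t) * t * (complex.Re (\tr (rho *m sigma)) + complex.Re (\tr (sigma *m rho)))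
    + t ^+ 2 * purity sigma.
Proof.
rewrite /mixture /purity mulmxDl !mulmxDr -!scalemxAl -!scalemxAr.
(* Abstracting the products keeps the trace rewrites below from unfolding them. *)
move: (rho *m rho) (rho *m sigma) (sigma *m rho) (sigma *m sigma) => X1 X2 X3 X4.
rewrite !mxtraceD !mxtraceZ !ReD !ReM_real; ring.
Qed.

Lemma purity_mixture_ivt rho sigma (P : R) :
  purity rho <= P <= purity sigma ->
  exists2 t, 0 <= t <= 1 & purity (mixture t rho sigma) = P.
Proof.
move=> /andP[le_rho_P le_P_sigma].
pose c := complex.Re (\tr (rho *m sigma)) + complex.Re (\tr (sigma *m rho)).
pose q := (1 - 'X) ^+ 2 * (purity rho)%:P + (1 - 'X) * 'X * c%:P
          + 'X ^+ 2 * (purity sigma)%:P - P%:P.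
have qE t : q.[t] = purity (mixture t rho sigma) - P.
  by rewrite purity_mixture !hornerE.
have [t t01 /rootP] : exists2 t, 0 <= t <= 1 & root q t.
  apply: poly_ivt => //; rewrite !qE mixture0 mixture1.
  by rewrite subr_le0 subr_ge0 le_rho_P.
by rewrite qE => /eqP; rewrite subr_eq0 => /eqP; exists t.
Qed.

End States.

Section LinearFunctional.
Variables (R : rcfType) (d m k : nat) (alpha : 'I_k -> 'I_k -> 'I_m -> 'I_m -> R).
Variables E sig : 'I_m -> 'I_k -> 'M[R[i]]_d.

Lemma RvalD (A B : 'M[R[i]]_d) :
  Rval alpha E sig (A + B) = Rval alpha E sig A + Rval alpha E sig B.
Proof.
rewrite /Rval -big_split; apply: eq_bigr => a _; rewrite -big_split.
apply: eq_bigr => b _; rewrite -big_split; apply: eq_bigr => x _.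
rewrite -big_split; apply: eq_bigr => y _.
by rewrite /seqprob mulmxDr mxtraceD mulrDl ReD mulrDr.
Qed.

Lemma RvalZ (c : R) (A : 'M[R[i]]_d) :
  Rval alpha E sig (c%:C *: A) = c * Rval alpha E sig A.
Proof.
rewrite /Rval mulr_sumr; apply: eq_bigr => a _; rewrite mulr_sumr.
apply: eq_bigr => b _; rewrite mulr_sumr; apply: eq_bigr => x _.
rewrite mulr_sumr; apply: eq_bigr => y _.
by rewrite /seqprob -scalemxAr mxtraceZ -mulrA ReM_real mulrCA.
Qed.

Lemma Rval_sum n (c : 'I_n -> R) (A : 'I_n -> 'M[R[i]]_d) :
  Rval alpha E sig (\sum_j (c j)%:C *: A j) = \sum_j c j * Rval alpha E sig (A j).
Proof.
apply: (big_ind2 (fun B r => Rval alpha E sig B = r)) => [|B r B' r' <- <-|j _].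
- by have := RvalZ 0 0; rewrite scale0r mul0r.
- exact: RvalD.
- exact: RvalZ.
Qed.

Lemma Rval_mixture t (rho sigma : 'M[R[i]]_d) :
  Rval alpha E sig (mixture t rho sigma)
  = (1 - t) * Rval alpha E sig rho + t * Rval alpha E sig sigma.
Proof. by rewrite /mixture RvalD !RvalZ. Qed.

End LinearFunctional.

Lemma convex_combination_le_max (R : realDomainType) (I : finType) (c v : I -> R) :
  (forall i, 0 <= c i) -> \sum_i c i = 1 -> exists j, \sum_i c i * v i <= v j.
Proof.
move=> c_ge0 c_sum1; case: (pickP (@predT I)) => [i0 _|noI]; last first.
  by move: c_sum1; rewrite big_pred0 // => /esym/eqP; rewrite oner_eq0.
have [j _ j_max] := @arg_maxP _ R I i0 xpredT v isT.
exists j; rewrite -[v j]mul1r -c_sum1 mulr_suml.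
by apply: ler_sum => i _; apply: ler_wpM2l; [exact: c_ge0 | exact: j_max].
Qed.

Section Monotonicity.
Variables (R : rcfType) (d m k : nat) (alpha : 'I_k -> 'I_k -> 'I_m -> 'I_m -> R).
Variables E sig : 'I_m -> 'I_k -> 'M[R[i]]_d.

Lemma Rval_le_pure_state (rho : 'M[R[i]]_d) : is_state rho ->
  exists2 sigma, is_state sigma /\ purity sigma = 1
               & Rval alpha E sig rho <= Rval alpha E sig sigma.
Proof.
move=> rho_state.
have [c [s [c_ge0 c_sum1 s_pure ->]]] := state_pure_decomposition rho_state.
have [j le_j] := convex_combination_le_max (fun j => Rval alpha E sig (s j)) c_ge0 c_sum1.
by exists (s j); rewrite // Rval_sum.
Qed.

Lemma Rval_le_at_purity (rho : 'M[R[i]]_d) (P : R) :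
  is_state rho -> purity rho <= P <= 1 ->
  exists rho', [/\ is_state rho', purity rho' = P
                 & Rval alpha E sig rho <= Rval alpha E sig rho'].
Proof.
move=> rho_state /andP[le_rho_P le_P1].
have [sigma [sigma_state sigma_pure] le_rho_sigma] := Rval_le_pure_state rho_state.
have [t t01 purity_t] : exists2 t, 0 <= t <= 1 & purity (mixture t rho sigma) = P.
  by apply: purity_mixture_ivt; rewrite sigma_pure le_rho_P.
exists (mixture t rho sigma); split => //; first exact: is_state_mixture.
have /andP[t_ge0 _] := t01.
rewrite Rval_mixture mulrBl mul1r -addrA lerDl addrC -mulrBr.
by rewrite mulr_ge0 ?subr_ge0.
Qed.

End Monotonicity.

Theorem mainTheorem5 (R : realType) (d m k : nat)
  (alpha : 'I_k -> 'I_k -> 'I_m -> 'I_m -> R) (P1 P2 : R) :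
  (2 <= d)%N ->
  (d%:R)^-1 <= P1 -> P1 <= P2 -> P2 <= 1 ->
  (Rmax d alpha P1 <= Rmax d alpha P2)%E.
Proof.
move=> _ _ le_P1_P2 le_P2_1.
apply: ge_ereal_sup => _ [rho [E [sig [rho_state purity_rho instrument ->]]]].
have [|rho' [rho'_state purity_rho' le_rho_rho']] :=
  Rval_le_at_purity alpha E sig (P := P2) rho_state.
  by rewrite purity_rho le_P1_P2.
apply: le_trans (ereal_sup_ubound _); last by exists rho', E, sig.
by rewrite lee_fin.
Qed.
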